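(* Let $T$ be a countable complete first-order theory with monster model $\mathfrak C$, and let $\pi(\bar x)$ be a partial type over $\emptyset$. Then the following are equivalent: (a) $\pi(\bar x)$ is amenable; (b) for every countable $\aleph_0$-homogeneous model $M\preceq\mathfrak C$ there is an $\mathrm{Aut}(M)$-invariant Keisler measure $\mu_{\bar x}$ over $M$ extending $\pi(\bar x)$; (c) the same as (b) but only for all sufficiently large such $M$ (i.e. for all countable $\aleph_0$-homogeneous $M\preceq\mathfrak C$ containing some fixed countable set $A\subseteq\mathfrak C$). If $T$ is uncountable, the same equivalences hold with ''countable, $\aleph_0$-homogeneous models'' replaced by ''strongly $\aleph_0$-homogeneous models of cardinality at most $|T|$''.
   Context: $\mathfrak C$ is $\kappa$-saturated and strongly $\kappa$-homogeneous for a large $\kappa$. For a model $N$, a Keisler measure over $N$ in variables $\bar x$ is a finitely additive probability measure on the $N$-definable sets in variables $\bar x$; it extends $\pi(\bar x)$ if it gives measure $0$ to every formula inconsistent with $\pi$; it is $\mathrm{Aut}(N)$-invariant if $\mu(\varphi(\bar x,\sigma(\bar b)))=\mu(\varphi(\bar x,\bar b))$ for all $\sigma\in\mathrm{Aut}(N)$. $\pi$ is amenable if there is an $\mathrm{Aut}(\mathfrak C)$-invariant regular Borel probability measure on $S_\pi(\mathfrak C)=\{q\in S_{\bar x}(\mathfrak C):\pi\subseteq q\}$ (equivalently, an $\mathrm{Aut}(\mathfrak C)$-invariant Keisler measure over $\mathfrak C$ extending $\pi$). *)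

From Stdlib Require Import Reals List.
From mathcomp Require Import all_boot.
Unset Printing Implicit Defensive.

Record signature := Signature {
  fsym : Type; fn_ar : fsym -> nat;
  rsym : Type; rl_ar : rsym -> nat }.
Arguments fn_ar {s} _.
Arguments rl_ar {s} _.

Inductive term (L : signature) : Type :=
| tvar : nat -> term L
| tapp : forall f : fsym L, ('I_(fn_ar f) -> term L) -> term L.

Inductive form (L : signature) : Type :=
| Feq : term L -> term L -> form L
| Frel : forall r : rsym L, ('I_(rl_ar r) -> term L) -> form L
| Ffalse : form L
| Fneg : form L -> form L
| Fand : form L -> form L -> form L
| Fex : nat -> form L -> form L.
Arguments tvar {L} _.
Arguments tapp {L} f _.
Arguments Feq {L} _ _.
Arguments Frel {L} r _.
Arguments Ffalse {L}.
Arguments Fneg {L} _.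
Arguments Fand {L} _ _.
Arguments Fex {L} _ _.

Fixpoint tfree {L : signature} (v : nat) (t : term L) : Prop :=
  match t with
  | tvar w => v = w
  | tapp f ts => exists i, tfree v (ts i)
  end.

Fixpoint ffree {L : signature} (v : nat) (phi : form L) : Prop :=
  match phi with
  | Feq t u => tfree v t \/ tfree v u
  | Frel r ts => exists i, tfree v (ts i)
  | Ffalse => False
  | Fneg p => ffree v p
  | Fand p q => ffree v p \/ ffree v q
  | Fex w p => v <> w /\ ffree v p
  end.

Definition sentence {L : signature} (phi : form L) : Prop := forall v, ~ ffree v phi.

Record structure (L : signature) := Structure {
  carrier :> Type;
  some_elt : carrier;
  fint : forall f : fsym L, ('I_(fn_ar f) -> carrier) -> carrier;
  rint : forall r : rsym L, ('I_(rl_ar r) -> carrier) -> Prop }.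
Arguments fint {L s} f _.
Arguments rint {L s} r _.

Fixpoint teval {L : signature} {M : structure L} (e : nat -> M) (t : term L) : M :=
  match t with
  | tvar v => e v
  | tapp f ts => fint f (fun i => teval e (ts i))
  end.

Definition upd {X : Type} (e : nat -> X) (v : nat) (d : X) : nat -> X :=
  fun w => if w == v then d else e w.

(* satisfaction in the substructure of M with domain D (quantifiers range over D);
   with D = everything this is ordinary satisfaction in M *)
Fixpoint sat_in {L : signature} {M : structure L} (D : M -> Prop)
    (e : nat -> M) (phi : form L) : Prop :=
  match phi with
  | Feq t u => teval e t = teval e u
  | Frel r ts => rint r (fun i => teval e (ts i))
  | Ffalse => False
  | Fneg p => ~ sat_in D e p
  | Fand p q => sat_in D e p /\ sat_in D e q
  | Fex w p => exists d, D d /\ sat_in D (upd e w d) p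
  end.

Definition sat {L : signature} (M : structure L) (e : nat -> M) (phi : form L) : Prop :=
  sat_in (fun _ : M => True) e phi.
Arguments sat {L} M e phi.

Definition theory (L : signature) := form L -> Prop.

Definition models {L : signature} (M : structure L) (T : theory L) : Prop :=
  forall phi, T phi -> forall e, sat M e phi.

Definition complete_theory {L : signature} (T : theory L) : Prop :=
  (forall phi, T phi -> sentence phi) /\
  (exists M : structure L, models M T) /\
  (forall phi, sentence phi ->
     (forall M : structure L, models M T -> forall e, sat M e phi) \/
     (forall M : structure L, models M T -> forall e, ~ sat M e phi)).

Definition card_le_set {X : Type} (A : X -> Prop) (Y : Type) : Prop :=
  exists f : X -> Y, forall x y, A x -> A y -> f x = f y -> x = y.
Definition type_le (Y Z : Type) : Prop :=
  exists f : Y -> Z, forall x y, f x = f y -> x = y.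
Definition card_lt_set {X : Type} (A : X -> Prop) (K : Type) : Prop :=
  card_le_set A K /\
  ~ (exists g : K -> X, (forall k, A (g k)) /\ forall k l, g k = g l -> k = l).

(* |T| := |L| + aleph_0 = |form L| *)
Definition countable_lang (L : signature) : Prop := type_le (form L) nat.
Definition card_le_T (L : signature) {X : Type} (A : X -> Prop) : Prop :=
  card_le_set A (form L).
(* kappa = |K| > |T| *)
Definition large_for (L : signature) (K : Type) : Prop :=
  type_le (form L) K /\ ~ type_le K (form L).

Definition is_aut {L : signature} {M : structure L} (D : M -> Prop) (s : M -> M) : Prop :=
  (forall x, D x -> D (s x)) /\
  (forall x y, D x -> D y -> s x = s y -> x = y) /\
  (forall y, D y -> exists x, D x /\ s x = y) /\
  (forall f a, (forall i, D (a i)) -> s (fint f a) = fint f (fun i => s (a i))) /\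
  (forall r a, (forall i, D (a i)) -> (rint r a <-> rint r (fun i => s (a i)))).

Definition saturated {L : signature} (C : structure L) (K : Type) : Prop :=
  forall A : C -> Prop, card_lt_set A K ->
  forall p : form L -> (nat -> C) -> Prop,
    (forall phi e, p phi e -> forall v, v <> 0 -> ffree v phi -> A (e v)) ->
    (forall l : list (form L * (nat -> C)),
        (forall q, In q l -> p q.1 q.2) ->
        exists c, forall q, In q l -> sat C (upd q.2 0 c) q.1) ->
    exists c, forall phi e, p phi e -> sat C (upd e 0 c) phi.

Definition strongly_homogeneous {L : signature} (C : structure L) (K : Type) : Prop :=
  forall A : C -> Prop, card_lt_set A K ->
  forall f : C -> C,
    (forall phi e, (forall v, ffree v phi -> A (e v)) ->
        (sat C e phi <-> sat C (fun v => f (e v)) phi)) ->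
    exists s, is_aut (fun _ : C => True) s /\ forall x, A x -> s x = f x.

Definition elem_sub {L : signature} {C : structure L} (M : C -> Prop) : Prop :=
  (exists x, M x) /\
  (forall f a, (forall i, M (a i)) -> M (fint f a)) /\
  (forall phi e, (forall v, ffree v phi -> M (e v)) -> (sat_in M e phi <-> sat C e phi)).

Definition tuple_in {L : signature} {C : structure L} (M : C -> Prop) (n : nat)
  (a : nat -> C) : Prop := forall i, i < n -> M (a i).

Definition same_type {L : signature} {C : structure L} (M : C -> Prop) (n : nat)
  (a b : nat -> C) : Prop :=
  forall phi : form L, (forall v, ffree v phi -> v < n) ->
    (sat_in M a phi <-> sat_in M b phi).

Definition aleph0_homogeneous {L : signature} {C : structure L} (M : C -> Prop) : Prop :=
  forall n a b, tuple_in M n a -> tuple_in M n b -> same_type M n a b ->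
  forall c, M c -> exists d, M d /\ same_type M n.+1 (upd a n c) (upd b n d).

Definition strongly_aleph0_homogeneous {L : signature} {C : structure L}
  (M : C -> Prop) : Prop :=
  forall n a b, tuple_in M n a -> tuple_in M n b -> same_type M n a b ->
  exists s, is_aut M s /\ forall i, i < n -> s (a i) = b i.

Definition countable_set {X : Type} (A : X -> Prop) : Prop := card_le_set A nat.

(* the tuple x = (x_0..x_{n-1}) occupies variables 0..n-1; parameters are the
   values of the environment e at variables >= n *)
Definition merge {X : Type} {n : nat} (a : 'I_n -> X) (e : nat -> X) : nat -> X :=
  fun v => if @insub nat (fun k => k < n) 'I_n v is Some j then a j else e v.

Definition params_in {L : signature} {C : structure L} (M : C -> Prop) (n : nat)
  (phi : form L) (e : nat -> C) : Prop :=
  forall v, n <= v -> ffree v phi -> M (e v).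

Definition defset {L : signature} {C : structure L} (M : C -> Prop) (n : nat)
  (phi : form L) (e : nat -> C) : ('I_n -> C) -> Prop :=
  fun a => (forall i, M (a i)) /\ sat_in M (merge a e) phi.

Definition definable {L : signature} {C : structure L} (M : C -> Prop) (n : nat)
  (X : ('I_n -> C) -> Prop) : Prop :=
  exists phi e, params_in M n phi e /\ forall a, X a <-> defset M n phi e a.

Definition keisler_measure {L : signature} {C : structure L} (M : C -> Prop) (n : nat)
  (mu : (('I_n -> C) -> Prop) -> R) : Prop :=
  (forall X Y, definable M n X -> definable M n Y -> (forall a, X a <-> Y a) ->
      mu X = mu Y) /\
  (forall X, definable M n X -> Rle R0 (mu X)) /\
  mu (fun a => forall i, M (a i)) = R1 /\
  (forall X Y, definable M n X -> definable M n Y -> (forall a, ~ (X a /\ Y a)) ->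
      mu (fun a => X a \/ Y a) = Rplus (mu X) (mu Y)).

Definition consistent_with {L : signature} {C : structure L} (n : nat)
  (pi : form L -> Prop) (phi : form L) (e : nat -> C) : Prop :=
  exists a : 'I_n -> C, (forall psi, pi psi -> sat C (merge a e) psi) /\
                        sat C (merge a e) phi.

Definition extends_type {L : signature} {C : structure L} (M : C -> Prop) (n : nat)
  (pi : form L -> Prop) (mu : (('I_n -> C) -> Prop) -> R) : Prop :=
  forall phi e, params_in M n phi e -> ~ consistent_with n pi phi e ->
    mu (defset M n phi e) = R0.

Definition aut_invariant {L : signature} {C : structure L} (M : C -> Prop) (n : nat)
  (mu : (('I_n -> C) -> Prop) -> R) : Prop :=
  forall s, is_aut M s -> forall phi e, params_in M n phi e ->
    mu (defset M n phi (fun v => s (e v))) = mu (defset M n phi e).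

Definition inv_keisler_ext {L : signature} {C : structure L} (M : C -> Prop) (n : nat)
  (pi : form L -> Prop) : Prop :=
  exists mu, keisler_measure M n mu /\ extends_type M n pi mu /\ aut_invariant M n mu.

(* amenability of pi, via the equivalent Keisler-measure-over-C formulation *)
Definition amenable {L : signature} (C : structure L) (n : nat) (pi : form L -> Prop) : Prop :=
  inv_keisler_ext (fun _ : C => True) n pi.

(* (a) => (b): an automorphism of a small elementary submodel M of C preserves
   satisfaction in C of formulas over M, so by strong homogeneity it extends to
   an automorphism of C.  Hence restricting an Aut(C)-invariant Keisler measure
   to the M-definable sets (each read in C through an M-definition, which is
   harmless since M is elementary in C) gives an Aut(M)-invariant measure.
   (c) => (a): for a finite set j of formulas with parameters, let M_j be the
   closure of A and the parameters of j under Tarski-Vaught witnesses and under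
   automorphisms of C realising elementary maps between finite tuples.  M_j is
   an elementary submodel of size at most |T|, it is strongly aleph_0-homogeneous,
   and an automorphism of C moving finitely many points of M_j inside M_j agrees
   there with an automorphism of M_j.  Take the limit, along an ultrafilter
   containing all the cones {j | j0 included in j}, of the measures over the M_j
   given by (c): it is a Keisler measure over C extending pi, and it is
   Aut(C)-invariant because each instance mu(phi(x, s e)) = mu(phi(x, e)) holds
   in every M_j containing both formulas.  In the countable case the same
   argument applies, as |T| = aleph_0 and strong aleph_0-homogeneity implies
   aleph_0-homogeneity. *)

From Stdlib Require Import Reals List Lra Lia Classical ClassicalEpsilon FunctionalExtensionality.
From mathcomp Require Import all_boot.
From mathcomp Require filter.
Set Implicit Arguments. Unset Strict Implicit.

Lemma In_mem (T : eqType) (s : seq T) x : In x s <-> x \in s.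
Proof.
elim: s => [|y s IH] //=; rewrite inE.
split=> [[->|/IH ->]|/orP [/eqP ->|/IH h]]; rewrite ?eqxx ?orbT //; by [left|right].
Qed.

Lemma In_nthP (X : Type) (x0 : X) s y : In y s <-> exists2 i, i < size s & nth x0 s i = y.
Proof.
elim: s y => [|x s IH] y /=; first by split=> // -[].
split=> [[<-|/IH [i hi <-]]|[[|i] /= hi <-]]; [by exists 0|by exists i.+1|by left|].
by right; apply/IH; exists i.
Qed.

Lemma In_map (X Y : Type) (f : X -> Y) (s : seq X) y :
  In y (map f s) <-> exists2 x, In x s & f x = y.
Proof.
elim: s => [|x s IH] /=; first by split=> // -[].
rewrite IH; split=> [[<-|[z hz <-]]|[z [<-|hz] <-]].
- by exists x; [left|].
- by exists z; [right|].
- by left.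
- by right; exists z.
Qed.

Lemma In_cat (X : Type) (x : X) s1 s2 : In x (s1 ++ s2) <-> In x s1 \/ In x s2.
Proof.
elim: s1 => [|y s1 IH] /=; first by split=> [|[]] //; right.
by rewrite IH; tauto.
Qed.

Lemma In_map_iota (X : Type) (a : nat -> X) n x :
  In x (map a (iota 0 n)) <-> exists2 i, i < n & a i = x.
Proof.
rewrite In_map; split => [[i /in_seq hi <-]|[i hi <-]]; exists i => //.
- by apply/ltP; lia.
- by apply/in_seq; move/ltP: hi; lia.
Qed.

Section Syntax.
Variable L : signature.

Definition Ftrue : form L := Fneg Ffalse.
Definition For (p q : form L) : form L := Fneg (Fand (Fneg p) (Fneg q)).

Fixpoint tvars (t : term L) : seq nat :=
  match t with
  | tvar v => [:: v]
  | tapp f ts => flatten [seq tvars (ts i) | i <- enum 'I_(fn_ar f)]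
  end.

Fixpoint fvars (phi : form L) : seq nat :=
  match phi with
  | Feq t u => tvars t ++ tvars u
  | Frel r ts => flatten [seq tvars (ts i) | i <- enum 'I_(rl_ar r)]
  | Ffalse => [::]
  | Fneg p => fvars p
  | Fand p q => fvars p ++ fvars q
  | Fex w p => [seq v <- fvars p | v != w]
  end.

Lemma mem_flatten_ord k (g : 'I_k -> seq nat) v :
  (v \in flatten [seq g i | i <- enum 'I_k]) <-> exists i, v \in g i.
Proof.
split=> [/flattenP [s /mapP [i _ ->] vs]|[i vi]]; first by exists i.
by apply/flattenP; exists (g i) => //; apply/mapP; exists i; rewrite ?mem_enum.
Qed.

Lemma tfree_tvars t v : tfree v t <-> v \in tvars t.
Proof.
elim: t => [w|f ts IH] /=; first by rewrite inE; split => [->|/eqP ->].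
by rewrite mem_flatten_ord; split => -[i /IH h]; exists i.
Qed.

Lemma ffree_fvars phi v : ffree v phi <-> v \in fvars phi.
Proof.
elim: phi => [t u|r ts| |p IH|p IHp q IHq|w p IH] /=.
- by rewrite mem_cat !tfree_tvars; exact: (rwP orP).
- by rewrite mem_flatten_ord; split => -[i /tfree_tvars h]; exists i.
- by [].
- exact: IH.
- by rewrite mem_cat IHp IHq; exact: (rwP orP).
- rewrite mem_filter IH.
  by split => [[/eqP ne ->]|/andP [/eqP ? ->]] //; rewrite ne.
Qed.

Lemma eq_teval (M : structure L) (e e' : nat -> M) t :
  (forall v, tfree v t -> e v = e' v) -> teval e t = teval e' t.
Proof.
elim: t => [w|f ts IH] /= h; first exact: h.
congr (fint f _); apply: functional_extensionality => i; apply: IH => v hv.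
by apply: h; exists i.
Qed.

Lemma eq_sat_in (M : structure L) (D : M -> Prop) phi (e e' : nat -> M) :
  (forall v, ffree v phi -> e v = e' v) -> (sat_in D e phi <-> sat_in D e' phi).
Proof.
elim: phi e e' => [t u|r ts| |p IH|p IHp q IHq|w p IH] e e' h /=.
- by rewrite (@eq_teval _ e e' t) ?(@eq_teval _ e e' u) // => v hv; apply: h; [right|left].
- have -> // : (fun i => teval e (ts i)) = (fun i => teval e' (ts i)).
  apply: functional_extensionality => i; apply: eq_teval => v hv; apply: h; by exists i.
- by [].
- by rewrite (IH e e').
- by rewrite (IHp e e') ?(IHq e e') // => v hv; apply: h; [right|left].
- have hu d : forall v, ffree v p -> upd e w d v = upd e' w d v.
    move=> v hv; rewrite /upd; case: eqP => // /eqP ne; apply: h; split => //; exact/eqP.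
  by split=> -[d [Dd hd]]; exists d; split => //;
    [rewrite -(IH _ _ (hu d))|rewrite (IH _ _ (hu d))].
Qed.

Lemma ffree_upd {X : Type} (P : X -> Prop) w (p : form L) (e : nat -> X) d :
  (forall v, ffree v (Fex w p) -> P (e v)) -> P d -> forall v, ffree v p -> P (upd e w d v).
Proof.
move=> h Pd v hv; rewrite /upd; case: eqP => [//|/eqP ne].
by apply: h; split => //; exact/eqP.
Qed.

Fixpoint rename_term (r : nat -> nat) (t : term L) : term L :=
  match t with
  | tvar v => tvar (r v)
  | tapp f ts => tapp f (fun i => rename_term r (ts i))
  end.

Fixpoint rename_form (r : nat -> nat) (phi : form L) : form L :=
  match phi with
  | Feq t u => Feq (rename_term r t) (rename_term r u)
  | Frel s ts => Frel s (fun i => rename_term r (ts i))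
  | Ffalse => Ffalse
  | Fneg p => Fneg (rename_form r p)
  | Fand p q => Fand (rename_form r p) (rename_form r q)
  | Fex w p => Fex (r w) (rename_form r p)
  end.

Lemma teval_rename (M : structure L) (e : nat -> M) r t :
  teval e (rename_term r t) = teval (fun v => e (r v)) t.
Proof.
elim: t => [w|f ts IH] //=.
by congr (fint f _); apply: functional_extensionality => i; exact: IH.
Qed.

Lemma sat_in_rename (M : structure L) (D : M -> Prop) r (rI : injective r) phi e :
  sat_in D e (rename_form r phi) <-> sat_in D (fun v => e (r v)) phi.
Proof.
elim: phi e => [t u|s ts| |p IH|p IHp q IHq|w p IH] e /=.
- by rewrite !teval_rename.
- have -> // : (fun i => teval e (rename_term r (ts i))) =
               (fun i => teval (fun v => e (r v)) (ts i)).
  by apply: functional_extensionality => i; exact: teval_rename.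
- by [].
- by rewrite IH.
- by rewrite IHp IHq.
- have E d : (fun v => upd e (r w) d (r v)) = upd (fun v => e (r v)) w d.
    apply: functional_extensionality => v; rewrite /upd.
    by case: (v =P w) => [->|ne]; [rewrite eqxx|case: (r v =P r w) => // /rI].
  by split=> -[d [Dd hd]]; exists d; split => //; move: hd; rewrite IH E.
Qed.

Lemma tfree_rename r t v : tfree v (rename_term r t) -> exists u, tfree u t /\ v = r u.
Proof.
elim: t => [w|f ts IH] /=; first by move=> ->; exists w.
by move=> [i /IH [u [hu ->]]]; exists u; split => //; exists i.
Qed.

Lemma ffree_rename r phi v : ffree v (rename_form r phi) -> exists u, ffree u phi /\ v = r u.
Proof.
elim: phi v => [t u|s ts| |p IH|p IHp q IHq|w p IH] v //=.
- by move=> [/tfree_rename [x [hx ->]]|/tfree_rename [x [hx ->]]]; exists x; split => //;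
    [left|right].
- by move=> [i /tfree_rename [x [hx ->]]]; exists x; split => //; exists i.
- exact: IH.
- by move=> [/IHp [x [hx ->]]|/IHq [x [hx ->]]]; exists x; split => //; [left|right].
- move=> [ne /IH [x [hx ex]]]; exists x; split => //; split => // ewx.
  by apply: ne; rewrite ex ewx.
Qed.

Section Automorphisms.
Variables (M : structure L) (D : M -> Prop) (s : M -> M).
Hypothesis s_aut : is_aut D s.
Hypothesis D_closed : forall f a, (forall i, D (a i)) -> D (fint f a).

Lemma teval_aut (e : nat -> M) t : (forall v, tfree v t -> D (e v)) ->
  D (teval e t) /\ teval (fun v => s (e v)) t = s (teval e t).
Proof.
case: s_aut => [_ [_ [_ [s_fint _]]]].
elim: t => [w|f ts IH] /= h; first by split => //; apply: h.
have {}IH i : D (teval e (ts i)) /\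
    teval (fun v => s (e v)) (ts i) = s (teval e (ts i)).
  by apply: IH => v hv; apply: h; exists i.
split; first by apply: D_closed => i; case: (IH i).
rewrite s_fint; last by move=> i; case: (IH i).
by congr (fint f _); apply: functional_extensionality => i; case: (IH i).
Qed.

Lemma sat_in_aut phi (e : nat -> M) : (forall v, ffree v phi -> D (e v)) ->
  (sat_in D e phi <-> sat_in D (fun v => s (e v)) phi).
Proof.
case: s_aut => [sD [sI [s_onto [_ s_rint]]]].
elim: phi e => [t u|r ts| |p IH|p IHp q IHq|w p IH] e h /=.
- have [Dt ->] := @teval_aut e t (fun v hv => h v (or_introl hv)).
  have [Du ->] := @teval_aut e u (fun v hv => h v (or_intror hv)).
  by split => [->|] //; exact: sI.
- have H i : D (teval e (ts i)) /\
    teval (fun v => s (e v)) (ts i) = s (teval e (ts i)).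
    by apply: teval_aut => v hv; apply: h; exists i.
  have -> : (fun i => teval (fun v => s (e v)) (ts i)) = (fun i => s (teval e (ts i))).
    by apply: functional_extensionality => i; case: (H i).
  by apply: s_rint => i; case: (H i).
- by [].
- by rewrite (IH e h).
- by rewrite (IHp e) ?(IHq e) // => v hv; apply: h; [right|left].
- have E d : (fun v => s (upd e w d v)) = upd (fun v => s (e v)) w (s d).
    by apply: functional_extensionality => v; rewrite /upd; case: eqP.
  have hu d : D d -> forall v, ffree v p -> D (upd e w d v) by exact: ffree_upd.
  split=> [[d [Dd hd]]|[d [Dd hd]]].
  + by exists (s d); split; [exact: sD|rewrite -E -(IH _ (hu d Dd))].
  + have [x [Dx ex]] := s_onto d Dd; subst d.
    by exists x; split => //; rewrite (IH _ (hu x Dx)) E.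
Qed.

End Automorphisms.

Lemma tarski_vaught (M : structure L) (D : M -> Prop) :
  (forall w p e, (forall v, ffree v (Fex w p) -> D (e v)) -> sat M e (Fex w p) ->
     exists d, D d /\ sat M (upd e w d) p) ->
  forall phi e, (forall v, ffree v phi -> D (e v)) -> (sat_in D e phi <-> sat M e phi).
Proof.
move=> witness; rewrite /sat.
elim=> [t u|r ts| |p IH|p IHp q IHq|w p IH] e h //=.
- by rewrite (IH e h).
- by rewrite (IHp e) ?(IHq e) // => v hv; apply: h; [right|left].
- have hu d : D d -> forall v, ffree v p -> D (upd e w d v).
    move=> Dd v hv; rewrite /upd; case: eqP => [//|/eqP ne].
    by apply: h; split => //; exact/eqP.
  split=> [[d [Dd hd]]|hd].
  + by exists d; split => //; rewrite -(IH _ (hu d Dd)).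
  + have [d [Dd hd']] := witness w p e h hd.
    by exists d; split => //; rewrite (IH _ (hu d Dd)).
Qed.

End Syntax.
Arguments Ftrue {L}.

Section Definability.
Variable L : signature.
Variable C : structure L.

Fixpoint Fexs (vs : seq nat) (p : form L) : form L :=
  if vs is v :: vs' then Fex v (Fexs vs' p) else p.

Fixpoint upds {X : Type} (E : nat -> X) (vs : seq nat) (ds : seq X) : nat -> X :=
  match vs, ds with
  | v :: vs', d :: ds' => upds (upd E v d) vs' ds'
  | _, _ => E
  end.

Lemma sat_in_Fexs (D : C -> Prop) vs p (E : nat -> C) :
  sat_in D E (Fexs vs p) <->
  exists ds, [/\ size ds = size vs, forall d, In d ds -> D d & sat_in D (upds E vs ds) p].
Proof.
elim: vs E => [|v vs IH] E /=.
  split=> [h|[ds [sz _ h]]]; first by exists [::].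
  by case: ds sz h.
split=> [[d [Dd /IH [ds [sz hD h]]]]|[ds [sz hD h]]].
- exists (d :: ds); split; rewrite /= ?sz //.
  by move=> x /= [<-|/hD].
- case: ds sz hD h => [|d ds] //= [sz] hD h.
  exists d; split; first by apply: hD; left.
  by apply/IH; exists ds; split => // x hx; apply: hD; right.
Qed.

Lemma upds_map {X : Type} vs (E : nat -> X) h w :
  upds E vs (map h vs) w = if w \in vs then h w else E w.
Proof.
elim: vs E => [|v vs IH] E //=.
by rewrite IH inE /upd; case: (w =P v) => [->|ne] /=; first by case: (v \in vs).
Qed.

Lemma upds_notin {X : Type} vs ds (E : nat -> X) w :
  w \notin vs -> upds E vs ds w = E w.
Proof.
elim: vs ds E => [|v vs IH] [|d ds] E //=.
rewrite inE negb_or => /andP [ne nin]; rewrite IH // /upd.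
by case: eqP ne => // ->; rewrite eqxx.
Qed.

Lemma ffree_Fexs vs p v : ffree v (Fexs vs p) <-> ffree v p /\ v \notin vs.
Proof.
elim: vs => [|w vs IH] /=; first by split => [|[]].
rewrite IH inE negb_or.
split => [[/eqP ne [h ->]]|[h /andP [/eqP ne ->]]]; by rewrite ?ne.
Qed.

Lemma merge_lt n (X : Type) (a : 'I_n -> X) e v (h : v < n) : merge a e v = a (Ordinal h).
Proof.
by rewrite /merge; case: insubP => [j _ ej|]; [congr a; apply: val_inj|rewrite h].
Qed.

Lemma merge_ge n (X : Type) (a : 'I_n -> X) e v : n <= v -> merge a e v = e v.
Proof.
by move=> h; rewrite /merge; case: insubP => [j hj _|//]; move: hj; rewrite ltnNge h.
Qed.

Lemma sat_in_Fexs_tuple (D : C -> Prop) n p (E : nat -> C) :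
  sat_in D E (Fexs (iota 0 n) p) <->
  exists a : 'I_n -> C, (forall i, D (a i)) /\ sat_in D (merge a E) p.
Proof.
rewrite sat_in_Fexs; split => [[ds [sz hD h]]|[a [hD h]]].
- rewrite size_iota in sz.
  exists (fun i => nth (some_elt _ C) ds i); split.
    by move=> i; apply: hD; apply/(In_nthP (some_elt _ C)); exists i; rewrite ?sz.
  move: h; congr (sat_in D _ p); apply: functional_extensionality => v.
  rewrite -[in LHS](mkseq_nth (some_elt _ C) ds) /mkseq sz upds_map mem_iota add0n /=.
  by case: (ltnP v n) => hv; [rewrite merge_lt|rewrite merge_ge].
- exists (map (merge a E) (iota 0 n)); split; first by rewrite !size_map.
    by move=> d /In_map_iota [v hv <-]; rewrite merge_lt.
  move: h; congr (sat_in D _ p); apply: functional_extensionality => v.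
  by rewrite upds_map mem_iota add0n /=; case: (ltnP v n) => hv //; rewrite merge_ge.
Qed.

Definition fv_bound (phi : form L) := (foldr maxn 0 (fvars phi)).+1.

Lemma fv_bound_gt phi v : ffree v phi -> v < fv_bound phi.
Proof.
rewrite ffree_fvars /fv_bound ltnS; elim: (fvars phi) => [|w s IH] //=.
rewrite inE => /orP [/eqP ->|/IH h]; first exact: leq_maxl.
exact: leq_trans h (leq_maxr _ _).
Qed.

(* To combine phi(x, e) and psi(x, e') into one formula over a single
   environment, the parameter variables of psi are shifted above those of phi
   while the tuple variables 0..n-1 are kept. *)
Definition shift_params (n N v : nat) := if v < n then v else v + N.

Definition pair_env (n : nat) (phi : form L) (e e' : nat -> C) v :=
  if v < n + fv_bound phi then e v else e' (v - fv_bound phi).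

Definition pair_form (n : nat) (phi psi : form L) :=
  rename_form (shift_params n (fv_bound phi)) psi.

Lemma shift_params_inj n N : injective (shift_params n N).
Proof.
move=> v w; rewrite /shift_params.
case: (ltnP v n) => hv; case: (ltnP w n) => hw //.
- by move=> ev; move: hv; rewrite ev ltnNge (leq_trans hw (leq_addr _ _)).
- by move=> ew; move: hw; rewrite -ew ltnNge (leq_trans hv (leq_addr _ _)).
- exact: addIn.
Qed.

Lemma pair_env_l n phi e e' v : ffree v phi -> pair_env n phi e e' v = e v.
Proof.
move=> /fv_bound_gt hv; rewrite /pair_env.
by rewrite (leq_trans hv (leq_addl _ _)).
Qed.

Lemma sat_in_pair_l (D : C -> Prop) n phi e e' (a : 'I_n -> C) :
  sat_in D (merge a (pair_env n phi e e')) phi <-> sat_in D (merge a e) phi.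
Proof.
apply: eq_sat_in => v hv.
by case: (ltnP v n) => h; [rewrite !merge_lt|rewrite !merge_ge // pair_env_l].
Qed.

Lemma sat_in_pair_r (D : C -> Prop) n phi psi e e' (a : 'I_n -> C) :
  sat_in D (merge a (pair_env n phi e e')) (pair_form n phi psi) <->
  sat_in D (merge a e') psi.
Proof.
rewrite sat_in_rename; last exact: shift_params_inj.
suff -> : (fun v => merge a (pair_env n phi e e') (shift_params n (fv_bound phi) v)) =
          merge a e' by [].
apply: functional_extensionality => v; rewrite /shift_params.
case: (ltnP v n) => hv; first by rewrite !merge_lt.
rewrite !merge_ge ?(leq_trans hv (leq_addr _ _)) //.
by rewrite /pair_env ltn_add2r ltnNge hv /= addnK.
Qed.

Lemma params_in_pair (M : C -> Prop) n phi e psi e' :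
  params_in M n phi e -> params_in M n psi e' ->
  params_in M n phi (pair_env n phi e e') /\
  params_in M n (pair_form n phi psi) (pair_env n phi e e').
Proof.
move=> h1 h2; split=> v hv fv; first by rewrite pair_env_l //; exact: h1.
have [u [fu ev]] := ffree_rename fv; move: ev; rewrite /shift_params.
case: (ltnP u n) => hu ev; first by move: hv; rewrite ev leqNgt hu.
by rewrite ev /pair_env ltn_add2r ltnNge hu /= addnK; exact: h2.
Qed.

Lemma defset_For_pair (D : C -> Prop) n phi e psi e' a :
  defset D n (For phi (pair_form n phi psi)) (pair_env n phi e e') a <->
  defset D n phi e a \/ defset D n psi e' a.
Proof.
rewrite /defset /For /= sat_in_pair_l sat_in_pair_r.
split=> [[hD h]|[[hD h]|[hD h]]]; last 2 first; try by split => // -[].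
by case: (classic (sat_in D (merge a e) phi)) => h'; [left|right; split => //; tauto].
Qed.

Lemma params_in_For_pair (M : C -> Prop) n phi e psi e' :
  params_in M n phi e -> params_in M n psi e' ->
  params_in M n (For phi (pair_form n phi psi)) (pair_env n phi e e').
Proof.
move=> h1 h2; have [p1 p2] := params_in_pair h1 h2.
by move=> v hv /= [] fv; [apply: p1|apply: p2].
Qed.

Section ElementarySubstructure.
Variable M : C -> Prop.
Hypothesis M_elem : elem_sub M.

Lemma elem_sub_sat phi e :
  (forall v, ffree v phi -> M (e v)) -> (sat_in M e phi <-> sat C e phi).
Proof. by case: M_elem => [_ [_ h]]; exact: h. Qed.

Lemma elem_sub_fint f a : (forall i, M (a i)) -> M (fint f a).
Proof. by case: M_elem => [_ [h _]]; exact: h. Qed.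

Lemma elem_sub_realize n chi E (a : 'I_n -> C) :
  params_in M n chi E -> sat C (merge a E) chi ->
  exists a' : 'I_n -> C, (forall i, M (a' i)) /\ sat_in M (merge a' E) chi.
Proof.
move=> hp ha; apply/sat_in_Fexs_tuple; rewrite elem_sub_sat.
  by apply/sat_in_Fexs_tuple; exists a.
move=> v /ffree_Fexs [hv]; rewrite mem_iota add0n /= -leqNgt => nv; exact: hp.
Qed.

Lemma defset_elem_sub n phi e a : params_in M n phi e ->
  defset M n phi e a <-> (forall i, M (a i)) /\ sat C (merge a e) phi.
Proof.
move=> hp; rewrite /defset.
suff H : (forall i, M (a i)) -> forall v, ffree v phi -> M (merge a e v).
  by split=> -[ha h]; split => //; move: h; rewrite (elem_sub_sat (H ha)).
move=> ha v hv; case: (ltnP v n) => h'; first by rewrite merge_lt.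
by rewrite merge_ge //; exact: hp.
Qed.

Lemma elem_sub_defset_sub n phi e psi e' :
  params_in M n phi e -> params_in M n psi e' ->
  (forall a, defset M n phi e a -> defset M n psi e' a) ->
  forall a : 'I_n -> C, sat C (merge a e) phi -> sat C (merge a e') psi.
Proof.
move=> h1 h2 sub a hphi; apply: NNPP => hpsi.
have [p1 p2] := params_in_pair h1 h2.
set chi := Fand phi (Fneg (pair_form n phi psi)).
have hp : params_in M n chi (pair_env n phi e e').
  by move=> v hv /= [] fv; [apply: p1|apply: p2].
have hsat : sat C (merge a (pair_env n phi e e')) chi.
  by split; [apply/sat_in_pair_l|move/sat_in_pair_r].
have [a' [Ma' [/sat_in_pair_l hphi' /sat_in_pair_r hpsi']]] := elem_sub_realize hp hsat.
by apply/hpsi'; case: (sub a').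
Qed.

Lemma elem_sub_defset_eq n phi e psi e' :
  params_in M n phi e -> params_in M n psi e' ->
  (forall a, defset M n phi e a <-> defset M n psi e' a) ->
  forall a : 'I_n -> C, sat C (merge a e) phi <-> sat C (merge a e') psi.
Proof. by move=> h1 h2 eq a; split; apply: elem_sub_defset_sub => // b /eq. Qed.

Lemma elem_sub_defset_disjoint n phi e psi e' :
  params_in M n phi e -> params_in M n psi e' ->
  (forall a, ~ (defset M n phi e a /\ defset M n psi e' a)) ->
  forall a : 'I_n -> C, ~ (sat C (merge a e) phi /\ sat C (merge a e') psi).
Proof.
move=> h1 h2 dj a [hphi hpsi].
have sub b : defset M n phi e b -> defset M n (Fneg psi) e' b.
  by move=> [Mb hb]; split => // hb'; apply: (dj b).
exact: (@elem_sub_defset_sub n phi e (Fneg psi) e' h1 h2 sub a hphi hpsi).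
Qed.

End ElementarySubstructure.
End Definability.

Section ElementaryMaps.
Variable L : signature.
Variable C : structure L.
Let x0 := some_elt _ C.

Lemma card_lt_large (K : Type) (X : C -> Prop) :
  large_for L K -> card_le_set X (form L) -> card_lt_set X K.
Proof.
case=> [[iK iKI] nK] [iX iXI]; split.
  by exists (fun x => iK (iX x)) => x y hx hy /iKI; exact: iXI.
move=> [g [hg gI]]; apply: nK; exists (fun k => iX (g k)) => k l h.
by apply: gI; exact: iXI.
Qed.

Lemma aut_extend (K : Type) (M : C -> Prop) s :
  large_for L K -> strongly_homogeneous C K ->
  elem_sub M -> card_le_set M (form L) -> is_aut M s ->
  exists t, is_aut (fun _ => True) t /\ forall x, M x -> t x = s x.
Proof.
move=> HK Hsh HM cM hs; apply: Hsh; first exact: card_lt_large.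
move=> phi e he.
have he' v : ffree v phi -> M (s (e v)) by case: hs => [sM _] /he /sM.
rewrite -(elem_sub_sat HM he) -(elem_sub_sat HM he').
exact: (sat_in_aut hs (elem_sub_fint HM) he).
Qed.

Definition elementary_seq_map (l1 l2 : seq C) : Prop :=
  exists f : C -> C,
    (forall i, i < size l1 -> f (nth x0 l1 i) = nth x0 l2 i) /\
    (forall (phi : form L) e, (forall v, ffree v phi -> In (e v) l1) ->
       (sat C e phi <-> sat C (fun v => f (e v)) phi)).

Fixpoint Fands (ps : seq (form L)) : form L :=
  if ps is p :: ps' then Fand p (Fands ps') else Ftrue.

Lemma sat_in_Fands (D : C -> Prop) (E : nat -> C) (h : nat -> form L) l :
  sat_in D E (Fands (map h l)) <-> forall v, v \in l -> sat_in D E (h v).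
Proof.
elim: l => [|u l IH] /=; first by split => // _ [].
rewrite IH; split => [[h1 h2] v|H].
- by rewrite inE => /orP [/eqP ->|hv] //; exact: h2.
- split; first by apply: H; rewrite inE eqxx.
  by move=> v hv; apply: H; rewrite inE hv orbT.
Qed.

Lemma ffree_Fands (h : nat -> form L) l v :
  ffree v (Fands (map h l)) -> exists2 u, u \in l & ffree v (h u).
Proof.
elim: l => [|u l IH] //= [fv|/IH [w hw fw]]; first by exists u; rewrite ?inE ?eqxx.
by exists w; rewrite ?inE ?hw ?orbT.
Qed.

(* Capture-avoiding substitution v |-> h v: the free variables of phi are
   renamed to fresh ones (shifted by N) and then equated with their targets. *)
Definition Fsubst (N : nat) (h : nat -> nat) (phi : form L) : form L :=
  Fexs (map (addn^~ N) (fvars phi))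
    (Fand (Fands (map (fun v => Feq (tvar (v + N)) (tvar (h v))) (fvars phi)))
          (rename_form (addn^~ N) phi)).

Lemma notin_shifted N (h : nat -> nat) l v :
  h v < N -> h v \notin map (addn^~ N) l.
Proof. by move=> hv; apply/mapP => -[u _ eu]; move: hv; rewrite eu ltnNge leq_addl. Qed.

Lemma sat_Fsubst N (h : nat -> nat) (phi : form L) (c : nat -> C) :
  (forall v, v \in fvars phi -> h v < N) ->
  (sat C c (Fsubst N h phi) <-> sat C (fun v => c (h v)) phi).
Proof.
move=> hN; rewrite /sat /Fsubst sat_in_Fexs.
have rI : injective (addn^~ N) by move=> x y /addIn.
set vs := map (addn^~ N) (fvars phi).
have sat_shifted E : (forall v, v \in fvars phi -> E (v + N) = c (h v)) ->
    sat_in (fun _ => True) E (rename_form (addn^~ N) phi) <->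
    sat_in (fun _ => True) (fun v => c (h v)) phi.
  move=> hE; rewrite sat_in_rename //; apply: eq_sat_in => v /ffree_fvars; exact: hE.
split=> [[ds [_ _ [/sat_in_Fands hEq hphi]]]|hphi].
- apply/(sat_shifted (upds c vs ds)) => // v fv; move: (hEq v fv) => /=.
  by rewrite (upds_notin _ _ (notin_shifted _ (hN v fv))).
- pose ds := map (fun u => c (h (u - N))) vs.
  have hE v : v \in fvars phi -> upds c vs ds (v + N) = c (h v).
    by move=> fv; rewrite upds_map addnK (map_f (addn^~ N) fv).
  exists ds; split; rewrite ?size_map //.
  split; last exact/(sat_shifted _ hE).
  apply/sat_in_Fands => v fv /=.
  by rewrite hE // upds_notin // notin_shifted // hN.
Qed.

Lemma ffree_Fsubst N (h : nat -> nat) (phi : form L) v :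
  (forall u, u \in fvars phi -> h u < N) -> ffree v (Fsubst N h phi) -> v < N.
Proof.
move=> hN /ffree_Fexs [[fv|fv] nin].
- have [u hu /= [ev|ev]] := ffree_Fands fv; subst v; last exact: hN.
  by case/negP: nin; apply/mapP; exists u.
- have [u [fu ev]] := ffree_rename fv; subst v.
  by case/negP: nin; apply/mapP; exists u => //; exact/ffree_fvars.
Qed.

Lemma nth_map_iota (a : nat -> C) n i : i < n -> nth x0 (map a (iota 0 n)) i = a i.
Proof. by move=> hi; rewrite (nth_map 0) ?size_iota // nth_iota. Qed.

(* The map a_i |-> b_i is well defined because a_i = a_j is part of the type. *)
Lemma same_type_elementary_seq_map (M : C -> Prop) n (a b : nat -> C) :
  elem_sub M -> tuple_in M n a -> tuple_in M n b -> same_type M n a b ->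
  elementary_seq_map (map a (iota 0 n)) (map b (iota 0 n)).
Proof.
move=> HM ha hb hs.
have a_inj_b i j : i < n -> j < n -> a i = a j -> b i = b j.
  move=> hi hj eij; apply/(hs (Feq (tvar i) (tvar j))) => //.
  by move=> v [->|->].
pose idx x := epsilon (inhabits 0) (fun i => i < n /\ a i = x).
have idxP i : i < n -> idx (a i) < n /\ a (idx (a i)) = a i.
  by move=> hi; apply: (epsilon_spec (inhabits 0) (fun j => j < n /\ a j = a i)); exists i.
exists (fun x => b (idx x)); split.
  move=> i; rewrite size_map size_iota => hi; rewrite !nth_map_iota //.
  by have [h1 h2] := idxP i hi; exact: a_inj_b.
move=> phi e he.
pose g v := idx (e v).
have hg v : v \in fvars phi -> g v < n /\ a (g v) = e v.
  by move=> /ffree_fvars /he /In_map_iota [i hi ei]; rewrite /g -ei; exact: idxP.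
have gN v : v \in fvars phi -> g v < n by move/hg => [].
have fr v : ffree v (Fsubst n g phi) -> v < n by apply: ffree_Fsubst.
have -> : sat C e phi <-> sat C (fun v => a (g v)) phi.
  by apply: eq_sat_in => v /ffree_fvars /hg [].
rewrite -(sat_Fsubst a gN) -(sat_Fsubst b gN).
rewrite -!(elem_sub_sat HM) => [|v /fr hv|v /fr hv]; [|exact: hb|exact: ha].
exact: hs.
Qed.

End ElementaryMaps.

Section Cardinals.
Variable L : signature.

Definition form_of_nat (k : nat) : form L := Fex k Ffalse.

Lemma form_of_nat_inj : injective form_of_nat.
Proof. by move=> x y [->]. Qed.

Fixpoint list_index {X : Type} (x : X) (l : seq X) : nat :=
  if l is y :: l' then
    if excluded_middle_informative (x = y) then 0 else (list_index x l').+1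
  else 0.

Lemma list_index_inj {X : Type} (l : seq X) x y :
  In x l -> In y l -> list_index x l = list_index y l -> x = y.
Proof.
elim: l => [|z l IH] //= hx hy.
case: excluded_middle_informative => ex; case: excluded_middle_informative => ey //.
- by move=> _; rewrite ex ey.
- move=> [] /IH; apply; [case: hx => // e|case: hy => // e].
  + by case: ex.
  + by case: ey.
Qed.

Lemma card_le_In {X : Type} (l : seq X) : card_le_set (fun x => In x l) (form L).
Proof.
exists (fun x => form_of_nat (list_index x l)) => x y hx hy /form_of_nat_inj.
exact: list_index_inj.
Qed.

Lemma card_le_setU {X : Type} (A B : X -> Prop) :
  card_le_set A (form L) -> card_le_set B (form L) ->
  card_le_set (fun x => A x \/ B x) (form L).
Proof.
move=> [iA hA] [iB hB].
exists (fun x => if excluded_middle_informative (A x) then Fneg (iA x) else Fand Ffalse (iB x)).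
move=> x y hx hy.
case: excluded_middle_informative => ax; case: excluded_middle_informative => ay //.
- by move=> [] /hA; apply.
- by move=> [] /hB; apply; [case: hx|case: hy].
Qed.

Lemma card_le_form_of_nat {X : Type} (A : X -> Prop) :
  card_le_set A nat -> card_le_set A (form L).
Proof.
move=> [f hf]; exists (fun x => form_of_nat (f x)) => x y hx hy /form_of_nat_inj.
exact: hf.
Qed.

Lemma countable_card_le_T {X : Type} (A : X -> Prop) :
  countable_lang L -> (countable_set A <-> card_le_T L A).
Proof.
move=> [f hf]; split; first exact: card_le_form_of_nat.
by move=> [g hg]; exists (fun x => f (g x)) => x y hx hy /hf; exact: hg.
Qed.

End Cardinals.

Section Hull.
Variable L : signature.
Variable C : structure L.
Let x0 := some_elt _ C.

Definition witness (w : nat) (p : form L) (l : seq C) : C :=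
  epsilon (inhabits x0) (fun d => sat C (upd (nth x0 l) w d) p).

(* Defaults to the identity when l1 |-> l2 is not elementary. *)
Definition seq_aut (l1 l2 : seq C) : C -> C :=
  epsilon (inhabits id) (fun s => is_aut (fun _ => True) s /\
    (elementary_seq_map l1 l2 -> forall i, i < size l1 -> s (nth x0 l1 i) = nth x0 l2 i)).

Definition seq_aut_inv (l1 l2 : seq C) (y : C) : C :=
  epsilon (inhabits x0) (fun x => seq_aut l1 l2 x = y).

Inductive hull (S : C -> Prop) : C -> Prop :=
| hull_pt : hull S x0
| hull_base x : S x -> hull S x
| hull_witness w p l : (forall y, In y l -> hull S y) -> hull S (witness w p l)
| hull_aut l1 l2 x : (forall y, In y l1 -> hull S y) -> (forall y, In y l2 -> hull S y) ->
    hull S x -> hull S (seq_aut l1 l2 x)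
| hull_aut_inv l1 l2 x : (forall y, In y l1 -> hull S y) -> (forall y, In y l2 -> hull S y) ->
    hull S x -> hull S (seq_aut_inv l1 l2 x).

Lemma is_aut_id : is_aut (fun _ : C => True) id.
Proof. by do 2 split => //; split => [y _|]; [exists y|]. Qed.

Lemma hull_tarski_vaught S w p e :
  (forall v, ffree v (Fex w p) -> hull S (e v)) -> sat C e (Fex w p) ->
  exists d, hull S d /\ sat C (upd e w d) p.
Proof.
move=> he hs.
(* [witness] only sees a finite list, so e is first cut down to the free
   variables of Fex w p. *)
pose l := map (fun v => if excluded_middle_informative (ffree v (Fex w p)) then e v else x0)
              (iota 0 (fv_bound (Fex w p))).
have hl v : ffree v (Fex w p) -> nth x0 l v = e v.
  move=> hv; have hvb := fv_bound_gt hv.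
  by rewrite /l (nth_map 0) ?size_iota // nth_iota // add0n; case: excluded_middle_informative.
have hw : sat C (upd (nth x0 l) w (witness w p l)) p.
  apply: (epsilon_spec (inhabits x0) (fun d => sat C (upd (nth x0 l) w d) p)).
  by case: (proj2 (eq_sat_in _ hl) hs) => d [_ hd]; exists d.
exists (witness w p l); split.
  apply: hull_witness => y /In_map [v _ <-].
  by case: excluded_middle_informative => hv; [exact: he|exact: hull_pt].
move: hw; apply: (proj1 (eq_sat_in _ _)) => v hv.
rewrite /upd; case: eqP => // /eqP ne; apply: hl; split => //; exact/eqP.
Qed.

Lemma hull_elem_sub S : elem_sub (hull S).
Proof.
split; first by exists x0; exact: hull_pt.
split; last by apply: tarski_vaught => w p e; exact: hull_tarski_vaught.
move=> f a ha.
pose e v := if v is j.+1 then merge a (fun _ => x0) j else x0.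
have eE : (fun i : 'I_(fn_ar f) => e (nat_of_ord i).+1) = a.
  by apply: functional_extensionality => i; rewrite /e merge_lt; congr a; exact: val_inj.
pose phi := Fex 0 (Feq (tvar 0) (tapp f (fun i => tvar (nat_of_ord i).+1))).
have he v : ffree v phi -> hull S (e v).
  by move=> [ne [v0|[i ->]]]; [case: ne|rewrite /e merge_lt; exact: ha].
have hs : sat C e phi by exists (fint f a); split => //=; rewrite /upd /= eE.
have [d [Sd hd]] := hull_tarski_vaught he hs.
by move: hd; rewrite /sat /= /upd /= eE => <-.
Qed.

(* Each element of the hull is named by a formula, read as a construction
   tree; this bounds the hull by |form L|. *)
Section HullCardinality.
Variable S : C -> Prop.
Variable code : C -> form L.
Hypothesis code_inj : forall x y, S x -> S y -> code x = code y -> x = y.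

Definition decode_base (phi : form L) : C :=
  epsilon (inhabits x0) (fun x => S x /\ code x = phi).

Fixpoint decode (phi : form L) : C :=
  match phi with
  | Fneg p => decode_base p
  | Fex w (Fand p q) => witness w p (decode_seq q)
  | Fand (Fand p q) r => seq_aut (decode_seq p) (decode_seq q) (decode r)
  | Fand (Fex _ (Fand p q)) r => seq_aut_inv (decode_seq p) (decode_seq q) (decode r)
  | _ => x0
  end
with decode_seq (phi : form L) : seq C :=
  if phi is Fand p q then decode p :: decode_seq q else [::].

Lemma decode_seq_onto (l : seq C) : (forall y, In y l -> exists phi, decode phi = y) ->
  exists phi, decode_seq phi = l.
Proof.
elim: l => [|x l IH] h; first by exists Ffalse.
have [p <-] := h x (or_introl erefl).
by have [q <-] := IH (fun y hy => h y (or_intror hy)); exists (Fand p q).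
Qed.

Lemma decode_onto x : hull S x -> exists phi, decode phi = x.
Proof.
elim=> [|y Sy|w p l _ IH|l1 l2 y _ IH1 _ IH2 _ [r <-]|l1 l2 y _ IH1 _ IH2 _ [r <-]].
- by exists Ffalse.
- exists (Fneg (code y)); rewrite /= /decode_base.
  have [] := epsilon_spec (inhabits x0) (fun x => S x /\ code x = code y)
    (ex_intro _ y (conj Sy erefl)).
  by move=> Sx /code_inj; apply.
- by have [q <-] := decode_seq_onto IH; exists (Fex w (Fand p q)).
- have [p <-] := decode_seq_onto IH1; have [q <-] := decode_seq_onto IH2.
  by exists (Fand (Fand p q) r).
- have [p <-] := decode_seq_onto IH1; have [q <-] := decode_seq_onto IH2.
  by exists (Fand (Fex 0 (Fand p q)) r).
Qed.

Lemma hull_card_le : card_le_set (hull S) (form L).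
Proof.
exists (fun x => epsilon (inhabits Ffalse) (fun phi => decode phi = x)) => x y hx hy exy.
have := epsilon_spec (inhabits Ffalse) (fun phi => decode phi = x) (decode_onto hx).
by rewrite exy (epsilon_spec (inhabits Ffalse) (fun phi => decode phi = y) (decode_onto hy)).
Qed.

End HullCardinality.

Section SeqAut.
Variable K : Type.
Hypothesis HK : large_for L K.
Hypothesis Hsh : strongly_homogeneous C K.

Lemma seq_autP l1 l2 : is_aut (fun _ => True) (seq_aut l1 l2) /\
  (elementary_seq_map l1 l2 ->
     forall i, i < size l1 -> seq_aut l1 l2 (nth x0 l1 i) = nth x0 l2 i).
Proof.
apply: (epsilon_spec (inhabits id) (fun s => is_aut (fun _ => True) s /\ _)).
case: (classic (elementary_seq_map l1 l2)) => [[f [hf he]]|hP].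
  have [s [hs hsf]] := Hsh (card_lt_large HK (card_le_In L l1)) he.
  by exists s; split => // _ i hi; rewrite hsf ?hf //; apply/(In_nthP x0); exists i.
by exists id; split => //; exact: is_aut_id.
Qed.

Lemma seq_aut_invK l1 l2 y : seq_aut l1 l2 (seq_aut_inv l1 l2 y) = y.
Proof.
apply: (epsilon_spec (inhabits x0) (fun x => seq_aut l1 l2 x = y)).
have [[_ [_ [onto _]]] _] := seq_autP l1 l2.
by have [x [_ hx]] := onto y I; exists x.
Qed.

Lemma seq_aut_hull S l1 l2 :
  (forall y, In y l1 -> hull S y) -> (forall y, In y l2 -> hull S y) ->
  is_aut (hull S) (seq_aut l1 l2).
Proof.
move=> h1 h2; have [[_ [sI [_ [s_fint s_rint]]]] _] := seq_autP l1 l2.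
split; first by move=> x; exact: hull_aut.
split; first by move=> x y _ _; exact: sI.
split; last by split => [f a _|r a _]; [exact: s_fint|exact: s_rint].
move=> y hy; exists (seq_aut_inv l1 l2 y); split; last exact: seq_aut_invK.
exact: hull_aut_inv.
Qed.

Lemma hull_strongly_aleph0_homogeneous S : strongly_aleph0_homogeneous (hull S).
Proof.
move=> n a b ha hb hs.
have hab := same_type_elementary_seq_map (hull_elem_sub S) ha hb hs.
have hl c : tuple_in (hull S) n c -> forall y, In y (map c (iota 0 n)) -> hull S y.
  by move=> hc y /In_map_iota [i hi <-]; exact: hc.
exists (seq_aut (map a (iota 0 n)) (map b (iota 0 n))).
split; first exact: seq_aut_hull (hl a ha) (hl b hb).
move=> i hi; have [_ h] := seq_autP (map a (iota 0 n)) (map b (iota 0 n)).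
by move: (h hab i); rewrite size_map size_iota !nth_map_iota // => /(_ hi).
Qed.

Lemma hull_aut_restrict S (l : seq C) s : (forall y, In y l -> hull S y) ->
  is_aut (fun _ => True) s -> (forall y, In y l -> hull S (s y)) ->
  exists t, is_aut (hull S) t /\ forall y, In y l -> t y = s y.
Proof.
move=> hl hs hsl.
have hsl' y : In y (map s l) -> hull S y by move=> /In_map [x hx <-]; exact: hsl.
have hP : elementary_seq_map l (map s l).
  exists s; split; first by move=> i hi; rewrite (nth_map x0).
  by move=> phi e _; apply: (sat_in_aut hs).
exists (seq_aut l (map s l)); split; first exact: seq_aut_hull.
move=> y /(In_nthP x0) [i hi <-]; have [_ h] := seq_autP l (map s l).
by rewrite (h hP i hi) (nth_map x0).
Qed.

End SeqAut.
End Hull.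

Section UltrafilterLimit.
Local Open Scope R_scope.
Variables (J : Type) (U : (J -> Prop) -> Prop).
Hypothesis U_ultra : filter.UltraFilter U.

Lemma ultraI X Y : U X -> U Y -> U (fun j => X j /\ Y j).
Proof. exact: filter.filterI. Qed.

Lemma ultraS X Y : (forall j, X j -> Y j) -> U X -> U Y.
Proof. exact: filter.filterS. Qed.

Lemma ultraC X : U X \/ U (fun j => ~ X j).
Proof. exact: filter.in_ultra_setVsetC. Qed.

Lemma ultra_nonempty X : U X -> exists j, X j.
Proof.
move=> h; apply: NNPP => hn; apply: (filter.filter_not_empty U).
by apply: ultraS h => j xj; apply: hn; exists j.
Qed.

Definition converges (f : J -> R) (l : R) :=
  forall eps, 0 < eps -> U (fun j => Rabs (f j - l) < eps).

Lemma converges_unique f l1 l2 : converges f l1 -> converges f l2 -> l1 = l2.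
Proof.
move=> c1 c2; apply: NNPP => ne.
have hp : 0 < Rabs (l1 - l2) / 2.
  suff : 0 < Rabs (l1 - l2) by lra.
  by apply: Rabs_pos_lt => h; apply: ne; lra.
have [j [h1 h2]] := ultra_nonempty (ultraI (c1 _ hp) (c2 _ hp)).
have := Rabs_triang (l1 - f j) (f j - l2).
rewrite Rabs_minus_sym in h1.
have -> : l1 - f j + (f j - l2) = l1 - l2 by ring.
lra.
Qed.

Lemma converges_eventually f g l :
  U (fun j => f j = g j) -> converges g l -> converges f l.
Proof. by move=> he c eps hp; apply: ultraS (ultraI (c _ hp) he) => j [h ->]. Qed.

(* The limit is the supremum of the reals that f eventually dominates. *)
Lemma converges_bounded f : U (fun j => 0 <= f j <= 1) -> exists l, converges f l.
Proof.
move=> hb; pose E r := U (fun j => r <= f j).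
have E_bound : bound E.
  exists 1 => r hr; apply: Rnot_lt_le => h; apply: (filter.filter_not_empty U).
  by apply: ultraS (ultraI hr hb) => j [] /=; lra.
have E0 : E 0 by apply: ultraS hb => j [].
have [l [ub lub]] := completeness E E_bound (ex_intro _ 0 E0).
exists l => eps he.
have h1 : U (fun j => l - eps < f j).
  have [r [Er hr]] : exists r, E r /\ l - eps < r.
    apply: NNPP => hn; have : l <= l - eps; last lra.
    by apply: lub => r Er; apply: Rnot_lt_le => hr; apply: hn; exists r.
  by apply: ultraS Er => j /=; lra.
have h2 : U (fun j => f j < l + eps).
  case: (ultraC (fun j => f j < l + eps)) => // hn.
  have : E (l + eps) by apply: ultraS hn => j /=; lra.
  by move/ub; lra.
by apply: ultraS (ultraI h1 h2) => j [hj1 hj2]; apply: Rabs_def1; lra.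
Qed.

Definition ulim (f : J -> R) : R := epsilon (inhabits 0) (converges f).

Lemma ulim_converges f : U (fun j => 0 <= f j <= 1) -> converges f (ulim f).
Proof. by move=> hb; apply: epsilon_spec; exact: converges_bounded. Qed.

Lemma ulim_eq f l : converges f l -> ulim f = l.
Proof.
by move=> c; apply: (converges_unique (epsilon_spec (inhabits 0) (converges f) _) c); exists l.
Qed.

Lemma ulim_eventually f g : U (fun j => 0 <= g j <= 1) -> U (fun j => f j = g j) ->
  ulim f = ulim g.
Proof. by move=> hg he; apply: ulim_eq; apply: converges_eventually he (ulim_converges hg). Qed.

Lemma ulim_const f c : U (fun j => f j = c) -> ulim f = c.
Proof.
move=> he; apply: ulim_eq => eps hp; apply: ultraS he => j ->.
by rewrite Rminus_diag Rabs_R0.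
Qed.

Lemma ulim_add f g h : U (fun j => 0 <= g j <= 1) -> U (fun j => 0 <= h j <= 1) ->
  U (fun j => f j = g j + h j) -> ulim f = ulim g + ulim h.
Proof.
move=> hg hh he; apply: ulim_eq => eps hp.
have hp2 : 0 < eps / 2 by lra.
have conv := ultraI (ulim_converges hg hp2) (ulim_converges hh hp2).
apply: ultraS (ultraI conv he) => j [[h1 h2] ->].
have := Rabs_triang (g j - ulim g) (h j - ulim h).
have -> : g j - ulim g + (h j - ulim h) = g j + h j - (ulim g + ulim h) by ring.
lra.
Qed.

Lemma ulim_ge0 f : U (fun j => 0 <= f j <= 1) -> 0 <= ulim f.
Proof.
move=> hb; apply: Rnot_lt_le => hneg.
have hp : 0 < - ulim f by lra.
have [j [[h0 _] hj]] := ultra_nonempty (ultraI hb (ulim_converges hb hp)).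
move: hj => /Rabs_def2 [] /=; lra.
Qed.

End UltrafilterLimit.

Section KeislerMeasures.
Variable L : signature.
Variable C : structure L.

Lemma definable_defset (D : C -> Prop) n (phi : form L) e :
  params_in D n phi e -> definable D n (defset D n phi e).
Proof. by move=> h; exists phi, e. Qed.

Lemma defset_total n (phi : form L) e a :
  defset (fun _ : C => True) n phi e a <-> sat C (merge a e) phi.
Proof. by split=> [[]|] //; split. Qed.

Variables (D : C -> Prop) (n : nat) (mu : (('I_n -> C) -> Prop) -> R).
Hypothesis mu_measure : keisler_measure D n mu.

Lemma keisler_measure_ext X Y : definable D n X -> (forall a, X a <-> Y a) -> mu X = mu Y.
Proof.
case: mu_measure => [ext _] dX hXY; apply: ext => //.
by case: dX => [phi [e [hp hX]]]; exists phi, e; split => // a; rewrite -hXY.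
Qed.

Lemma keisler_measure_full e : mu (defset D n Ftrue e) = R1.
Proof.
case: mu_measure => [_ [_ [<- _]]]; apply: keisler_measure_ext.
  exact: definable_defset.
by move=> a; split=> [[]|] //; split.
Qed.

Lemma keisler_measure_le1 phi e : params_in D n phi e -> Rle (mu (defset D n phi e)) R1.
Proof.
move=> hp; case: mu_measure => [_ [ge0 [_ add]]].
have hp' : params_in D n (Fneg phi) e by [].
have dj a : ~ (defset D n phi e a /\ defset D n (Fneg phi) e a) by case=> [[_ h1] [_ h2]].
have hU : mu (fun a => defset D n phi e a \/ defset D n (Fneg phi) e a) = R1.
  rewrite -(keisler_measure_full e); symmetry; apply: keisler_measure_ext.
    exact: definable_defset.
  move=> a; split=> [[hD _]|[] [hD _]]; last 2 first; try by split.
  by case: (classic (sat_in D (merge a e) phi)) => h; [left|right]; split.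
have := add _ _ (definable_defset hp) (definable_defset hp') dj.
have := ge0 _ (definable_defset hp'); lra.
Qed.

End KeislerMeasures.

Section Restriction.
Variable L : signature.
Variable C : structure L.
Variables (n : nat) (pi : form L -> Prop).
Variable M : C -> Prop.
Hypothesis M_elem : elem_sub M.
Variable muC : (('I_n -> C) -> Prop) -> R.
Hypothesis muC_measure : keisler_measure (fun _ : C => True) n muC.

Definition M_definition (X : ('I_n -> C) -> Prop) : form L * (nat -> C) :=
  epsilon (inhabits (Ffalse, fun _ => some_elt _ C))
    (fun q => params_in M n q.1 q.2 /\ forall a, X a <-> defset M n q.1 q.2 a).

Lemma M_definitionP X : definable M n X ->
  params_in M n (M_definition X).1 (M_definition X).2 /\
  forall a, X a <-> defset M n (M_definition X).1 (M_definition X).2 a.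
Proof.
move=> [phi [e h]].
apply: (epsilon_spec (inhabits _)
  (fun q => params_in M n q.1 q.2 /\ forall a, X a <-> defset M n q.1 q.2 a)).
by exists (phi, e).
Qed.

(* Independent of the chosen M-definition of X since M is elementary in C
   (muC_defset_eq). *)
Definition restrict_measure (X : ('I_n -> C) -> Prop) : R :=
  muC (defset (fun _ => True) n (M_definition X).1 (M_definition X).2).

Lemma muC_defset_eq phi e psi e' : params_in M n phi e -> params_in M n psi e' ->
  (forall a, defset M n phi e a <-> defset M n psi e' a) ->
  muC (defset (fun _ => True) n phi e) = muC (defset (fun _ => True) n psi e').
Proof.
move=> h1 h2 h; apply: (keisler_measure_ext muC_measure); first exact: definable_defset.
by move=> a; rewrite !defset_total; exact: (elem_sub_defset_eq M_elem h1 h2 h).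
Qed.

Lemma restrict_measure_defset phi e : params_in M n phi e ->
  restrict_measure (defset M n phi e) = muC (defset (fun _ => True) n phi e).
Proof.
move=> h; have [h1 h2] := M_definitionP (definable_defset h).
by apply: muC_defset_eq => // a; rewrite -h2.
Qed.

Lemma restrict_measure_ext X Y : definable M n X -> (forall a, X a <-> Y a) ->
  restrict_measure X = restrict_measure Y.
Proof.
move=> dX hXY; have [h1 h2] := M_definitionP dX.
have dY : definable M n Y.
  by case: dX => [phi [e [hp hX]]]; exists phi, e; split => // a; rewrite -hXY.
have [h3 h4] := M_definitionP dY.
by apply: muC_defset_eq => // a; rewrite -h2 -h4.
Qed.

Lemma restrict_measure_add X Y : definable M n X -> definable M n Y ->
  (forall a, ~ (X a /\ Y a)) ->
  restrict_measure (fun a => X a \/ Y a) = Rplus (restrict_measure X) (restrict_measure Y).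
Proof.
move=> dX dY dj.
have [p1 hX] := M_definitionP dX; have [p2 hY] := M_definitionP dY.
set phi := (M_definition X).1 in p1 hX; set e := (M_definition X).2 in p1 hX.
set psi := (M_definition Y).1 in p2 hY; set e' := (M_definition Y).2 in p2 hY.
have hXY a : X a \/ Y a <-> defset M n (For phi (pair_form n phi psi)) (pair_env n phi e e') a.
  by rewrite defset_For_pair hX hY.
have pXY := params_in_For_pair p1 p2.
rewrite (restrict_measure_ext (ex_intro _ _ (ex_intro _ _ (conj pXY hXY))) hXY).
rewrite restrict_measure_defset //.
case: muC_measure => [_ [_ [_ add]]]; rewrite /restrict_measure -add; try exact: definable_defset.
  apply: (keisler_measure_ext muC_measure); first exact: definable_defset.
  by move=> a; exact: defset_For_pair.
move=> a; rewrite !defset_total; apply: (elem_sub_defset_disjoint M_elem p1 p2) => b.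
by rewrite -hX -hY; exact: dj.
Qed.

Lemma restrict_keisler_measure : keisler_measure M n restrict_measure.
Proof.
split; [|split; [|split]].
- by move=> X Y dX _; exact: restrict_measure_ext.
- move=> X dX; case: muC_measure => [_ [ge0 _]]; apply: ge0.
  exact: definable_defset.
- set e0 := fun _ : nat => some_elt _ C.
  have full a : defset M n Ftrue e0 a <-> forall i, M (a i) by split=> [[]|] //; split.
  rewrite -(restrict_measure_ext _ full) ?restrict_measure_defset //.
    exact: keisler_measure_full.
  exact: definable_defset.
- by move=> X Y dX dY; exact: restrict_measure_add.
Qed.

Lemma restrict_extends_type : extends_type (fun _ => True) n pi muC ->
  extends_type M n pi restrict_measure.
Proof. by move=> hC phi e hp hc; rewrite restrict_measure_defset //; exact: hC. Qed.

Lemma restrict_aut_invariant (K : Type) :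
  large_for L K -> strongly_homogeneous C K -> card_le_set M (form L) ->
  aut_invariant (fun _ => True) n muC -> aut_invariant M n restrict_measure.
Proof.
move=> HK Hsh cM hC s hs phi e hp.
have hp' : params_in M n phi (fun v => s (e v)).
  by move=> v hv fv; case: hs => [sM _]; apply: sM; exact: hp.
rewrite !restrict_measure_defset //.
have [t [ht hts]] := aut_extend HK Hsh M_elem cM hs.
rewrite -(hC t ht phi e (fun _ _ _ => I)).
apply: (keisler_measure_ext muC_measure); first exact: definable_defset.
move=> a; rewrite !defset_total; apply: eq_sat_in => v fv.
by case: (ltnP v n) => h; [rewrite !merge_lt|rewrite !merge_ge // hts //; exact: hp].
Qed.

End Restriction.

Lemma amenable_inv_keisler_ext_small (L : signature) (C : structure L) (K : Type) n pi
    (M : C -> Prop) :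
  large_for L K -> strongly_homogeneous C K -> amenable C n pi ->
  elem_sub M -> card_le_T L M -> inv_keisler_ext M n pi.
Proof.
move=> HK Hsh [mu [k [e i]]] HM cM; exists (restrict_measure M mu).
split; first exact: restrict_keisler_measure.
split; first exact: restrict_extends_type.
exact: restrict_aut_invariant HK Hsh cM i.
Qed.

Lemma ultrafilter_supersets (T : Type) : exists U : (seq T -> Prop) -> Prop,
  filter.UltraFilter U /\ forall qs : seq T, U (fun j => forall q, In q qs -> In q j).
Proof.
pose F (X : seq T -> Prop) := exists j0, forall j, (forall q, In q j0 -> In q j) -> X j.
have F_proper : filter.ProperFilter F.
  split; first by move=> [j0 h0]; exact: (h0 j0).
  split; first by exists [::].
  - move=> X Y [j0 h0] [j1 h1]; exists (j0 ++ j1) => j h.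
    by split; [apply: h0|apply: h1] => q hq; apply: h; rewrite In_cat; [left|right].
  - by move=> X Y hXY [j0 h0]; exists j0 => j h; apply: hXY; exact: h0.
have [U [U_ultra FU]] := filter.ultraFilterLemma F_proper.
by exists U; split => // qs; apply: FU; exists qs.
Qed.

Section Limit.
Variable L : signature.
Variable C : structure L.
Variable K : Type.
Hypothesis HK : large_for L K.
Hypothesis Hsh : strongly_homogeneous C K.
Variables (n : nat) (pi : form L -> Prop) (A : C -> Prop).
Hypothesis A_small : card_le_T L A.
Hypothesis A_measures : forall M : C -> Prop, elem_sub M -> card_le_T L M ->
  strongly_aleph0_homogeneous M -> (forall x, A x -> M x) -> inv_keisler_ext M n pi.

Local Notation pform := (form L * (nat -> C))%type.

Fixpoint params_of (j : seq pform) : seq C :=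
  if j is q :: j' then map q.2 (fvars q.1) ++ params_of j' else [::].

Lemma In_params_of j q v : In q j -> ffree v q.1 -> In (q.2 v) (params_of j).
Proof.
elim: j => [|q' j IH] //= [<-|hq] hv; rewrite In_cat; last by right; exact: IH.
by left; apply/In_map; exists v => //; apply/In_mem/ffree_fvars.
Qed.

Definition local_model (j : seq pform) : C -> Prop :=
  hull (fun x => A x \/ In x (params_of j)).

Lemma local_model_elem j : elem_sub (local_model j).
Proof. exact: hull_elem_sub. Qed.

Lemma local_model_params_of j q v : In q j -> ffree v q.1 -> local_model j (q.2 v).
Proof. by move=> hq hv; apply: hull_base; right; exact: In_params_of. Qed.

Lemma local_model_params j q : In q j -> params_in (local_model j) n q.1 q.2.
Proof. by move=> hq v _; exact: local_model_params_of. Qed.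

Lemma local_model_small j : card_le_T L (local_model j).
Proof.
have [code code_inj] := card_le_setU A_small (card_le_In L (params_of j)).
exact: hull_card_le code_inj.
Qed.

Definition local_measure (j : seq pform) : (('I_n -> C) -> Prop) -> R :=
  epsilon (inhabits (fun _ => R0)) (fun mu => keisler_measure (local_model j) n mu /\
    extends_type (local_model j) n pi mu /\ aut_invariant (local_model j) n mu).

Lemma local_measureP j :
  keisler_measure (local_model j) n (local_measure j) /\
  extends_type (local_model j) n pi (local_measure j) /\
  aut_invariant (local_model j) n (local_measure j).
Proof.
apply: (epsilon_spec (inhabits _) (fun mu => keisler_measure _ n mu /\ _)).
apply: A_measures; first exact: local_model_elem.
- exact: local_model_small.
- exact: (hull_strongly_aleph0_homogeneous HK Hsh).
- by move=> x hx; apply: hull_base; left.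
Qed.

Definition local_mass (j : seq pform) (q : pform) : R :=
  local_measure j (defset (local_model j) n q.1 q.2).

Definition csat (q : pform) (a : 'I_n -> C) := sat C (merge a q.2) q.1.

Lemma defset_local_model j q a : In q j ->
  defset (local_model j) n q.1 q.2 a <-> (forall i, local_model j (a i)) /\ csat q a.
Proof.
by move=> hq; apply: defset_elem_sub; [exact: local_model_elem|exact: local_model_params].
Qed.

Lemma local_mass_bounds j q : In q j -> Rle R0 (local_mass j q) /\ Rle (local_mass j q) R1.
Proof.
move=> hq; have [mu_measure _] := local_measureP j; split.
  by case: mu_measure => [_ [ge0 _]]; apply: ge0; exact/definable_defset/local_model_params.
exact/(keisler_measure_le1 mu_measure)/local_model_params.
Qed.

Lemma local_mass_ext j q1 q2 : In q1 j -> In q2 j ->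
  (forall a, csat q1 a <-> csat q2 a) -> local_mass j q1 = local_mass j q2.
Proof.
move=> h1 h2 he; have [mu_measure _] := local_measureP j.
apply: (keisler_measure_ext mu_measure); first exact/definable_defset/local_model_params.
by move=> a; rewrite !defset_local_model // he.
Qed.

Lemma local_mass_full j q : In q j -> (forall a, csat q a) -> local_mass j q = R1.
Proof.
move=> hq hall; have [mu_measure _] := local_measureP j.
rewrite -(keisler_measure_full mu_measure (fun _ => some_elt _ C)).
apply: (keisler_measure_ext mu_measure); first exact/definable_defset/local_model_params.
by move=> a; rewrite defset_local_model //; split=> [[]|[]] //; split.
Qed.

Lemma local_mass_add j q1 q2 q3 : In q1 j -> In q2 j -> In q3 j ->
  (forall a, csat q3 a <-> csat q1 a \/ csat q2 a) ->
  (forall a, ~ (csat q1 a /\ csat q2 a)) ->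
  local_mass j q3 = Rplus (local_mass j q1) (local_mass j q2).
Proof.
move=> h1 h2 h3 hu hd; have [[_ [_ [_ add]]] _] := local_measureP j.
have [mu_measure _] := local_measureP j.
rewrite /local_mass -add; try exact/definable_defset/local_model_params.
  apply: (keisler_measure_ext mu_measure); first exact/definable_defset/local_model_params.
  by move=> a; rewrite !defset_local_model // hu; tauto.
by move=> a []; rewrite !defset_local_model // => -[_ s1] [_ s2]; exact: (hd a).
Qed.

Lemma local_mass_inconsistent j q : In q j -> ~ consistent_with n pi q.1 q.2 -> local_mass j q = R0.
Proof.
move=> hq hc; have [_ [ext _]] := local_measureP j.
by apply: ext => //; exact: local_model_params.
Qed.

Lemma local_mass_aut j (phi : form L) e s : is_aut (fun _ => True) s ->
  In (phi, e) j -> In (phi, fun v => s (e v)) j ->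
  local_mass j (phi, fun v => s (e v)) = local_mass j (phi, e).
Proof.
move=> hs h1 h2; have [mu_measure [_ inv]] := local_measureP j.
have hl y : In y (map e (fvars phi)) -> local_model j y.
  by move=> /In_map [v /In_mem /ffree_fvars hv <-]; exact: (local_model_params_of h1).
have hsl y : In y (map e (fvars phi)) -> local_model j (s y).
  by move=> /In_map [v /In_mem /ffree_fvars hv <-]; exact: (local_model_params_of h2).
have [t [ht hts]] := hull_aut_restrict HK Hsh hl hs hsl.
rewrite /local_mass /= -(inv t ht phi e (local_model_params h1)).
apply: (keisler_measure_ext mu_measure); first exact: definable_defset (local_model_params h2).
move=> a; rewrite /defset; apply: and_iff_compat_l; apply: eq_sat_in => v hv.
case: (ltnP v n) => hvn; first by rewrite !merge_lt.
rewrite !merge_ge // hts //; apply/In_map; exists v => //.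
exact/In_mem/ffree_fvars.
Qed.

Lemma csat_defset q a : defset (fun _ : C => True) n q.1 q.2 a <-> csat q a.
Proof. exact: defset_total. Qed.

Section UltraLimit.
Variable U : (seq pform -> Prop) -> Prop.
Hypothesis U_ultra : filter.UltraFilter U.
Hypothesis U_supersets : forall qs, U (fun j => forall q, In q qs -> In q j).

Lemma eventually_in qs (P : seq pform -> Prop) :
  (forall j, (forall q, In q qs -> In q j) -> P j) -> U P.
Proof. by move=> h; apply: ultraS h (U_supersets qs). Qed.

Definition C_definition (X : ('I_n -> C) -> Prop) : pform :=
  epsilon (inhabits (Ffalse, fun _ => some_elt _ C)) (fun q => forall a, X a <-> csat q a).

Lemma C_definitionP X : definable (fun _ : C => True) n X ->
  forall a, X a <-> csat (C_definition X) a.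
Proof.
move=> [phi [e [_ h]]].
apply: (epsilon_spec (inhabits _) (fun q => forall a, X a <-> csat q a)).
by exists (phi, e) => a; rewrite h; exact: (csat_defset (phi, e)).
Qed.

Definition limit_measure (X : ('I_n -> C) -> Prop) : R :=
  ulim U (fun j => local_mass j (C_definition X)).

Lemma local_mass_bounds_eventually q :
  U (fun j => Rle R0 (local_mass j q) /\ Rle (local_mass j q) R1).
Proof.
by apply: (eventually_in (qs := [:: q])) => j h; apply: local_mass_bounds; apply: h; left.
Qed.

Lemma limit_measure_def X q : definable (fun _ : C => True) n X ->
  (forall a, X a <-> csat q a) -> limit_measure X = ulim U (fun j => local_mass j q).
Proof.
move=> dX hX; apply: ulim_eventually => //; first exact: local_mass_bounds_eventually.
apply: (eventually_in (qs := [:: C_definition X; q])) => j h.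
apply: local_mass_ext; [apply: h; left|apply: h; right; left|] => //.
by move=> a; rewrite -C_definitionP.
Qed.

Lemma limit_measure_defset phi e :
  limit_measure (defset (fun _ => True) n phi e) = ulim U (fun j => local_mass j (phi, e)).
Proof.
by apply: limit_measure_def => [|a]; [exact: definable_defset|exact: (csat_defset (phi, e))].
Qed.

Lemma limit_measure_add X Y : definable (fun _ : C => True) n X ->
  definable (fun _ : C => True) n Y -> (forall a, ~ (X a /\ Y a)) ->
  limit_measure (fun a => X a \/ Y a) = Rplus (limit_measure X) (limit_measure Y).
Proof.
move=> dX dY dj.
set q1 := C_definition X; set q2 := C_definition Y.
have hX := C_definitionP dX; have hY := C_definitionP dY.
set q3 := (For q1.1 (pair_form n q1.1 q2.1), pair_env n q1.1 q1.2 q2.2).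
have h3 a : csat q3 a <-> csat q1 a \/ csat q2 a.
  by rewrite -csat_defset defset_For_pair !csat_defset.
have dXY : definable (fun _ : C => True) n (fun a => X a \/ Y a).
  by exists q3.1, q3.2; split => // a; rewrite csat_defset h3 -hX -hY.
rewrite (limit_measure_def dXY (q := q3)); last by move=> a; rewrite h3 -hX -hY.
rewrite (limit_measure_def dX (C_definitionP dX)) (limit_measure_def dY (C_definitionP dY)).
apply: ulim_add => //; try exact: local_mass_bounds_eventually.
apply: (eventually_in (qs := [:: q1; q2; q3])) => j h.
apply: local_mass_add; [apply: h; left|apply: h; right; left|apply: h; right; right; left| |] => //.
by move=> a; rewrite -hX -hY; exact: dj.
Qed.

Lemma limit_keisler_measure : keisler_measure (fun _ : C => True) n limit_measure.
Proof.
split; [|split; [|split]].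
- move=> X Y dX dY hXY; rewrite (limit_measure_def dX (C_definitionP dX)).
  by rewrite (limit_measure_def dY (q := C_definition X)) // => a; rewrite -hXY C_definitionP.
- by move=> X _; apply: ulim_ge0 => //; exact: local_mass_bounds_eventually.
- have dT : definable (fun _ : C => True) n (fun a => forall i, True).
    by exists Ftrue, (fun _ => some_elt _ C); split => // a; split=> [_|[]] //; split.
  apply: ulim_const.
  apply: (eventually_in (qs := [:: C_definition (fun a => forall i, True)])) => j h.
  by apply: local_mass_full; [apply: h; left|move=> a; rewrite -C_definitionP].
- by move=> X Y dX dY; exact: limit_measure_add.
Qed.

Lemma limit_extends_type : extends_type (fun _ : C => True) n pi limit_measure.
Proof.
move=> phi e _ hc; rewrite limit_measure_defset; apply: ulim_const.
apply: (eventually_in (qs := [:: (phi, e)])) => j h.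
by apply: local_mass_inconsistent => //; apply: h; left.
Qed.

Lemma limit_aut_invariant : aut_invariant (fun _ : C => True) n limit_measure.
Proof.
move=> s hs phi e _; rewrite !limit_measure_defset.
apply: ulim_eventually => //; first exact: local_mass_bounds_eventually.
apply: (eventually_in (qs := [:: (phi, e); (phi, fun v => s (e v))])) => j h.
by apply: local_mass_aut => //; apply: h; [left|right; left].
Qed.

End UltraLimit.

Lemma amenable_of_local_measures : amenable C n pi.
Proof.
have [U [U_ultra U_supersets]] := ultrafilter_supersets pform.
exists (limit_measure U); split; first exact: limit_keisler_measure.
split; [exact: limit_extends_type|exact: limit_aut_invariant].
Qed.

End Limit.

Lemma strongly_aleph0_homogeneous_aleph0 (L : signature) (C : structure L) (M : C -> Prop) :
  elem_sub M -> strongly_aleph0_homogeneous M -> aleph0_homogeneous M.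
Proof.
move=> HM hs n a b ha hb ht c hc.
have [s [s_aut s_ab]] := hs n a b ha hb ht.
exists (s c); split; first by case: s_aut => [sM _]; exact: sM.
move=> phi hphi.
have upd_lt v : v < n.+1 -> v != n -> v < n by rewrite ltnS ltn_neqAle => -> ->.
have hM v : ffree v phi -> M (upd a n c v).
  by move=> /hphi hv; rewrite /upd; case: eqP => // /eqP ne; exact/ha/upd_lt.
rewrite (sat_in_aut s_aut (elem_sub_fint HM) hM).
apply: eq_sat_in => v /hphi hv; rewrite /upd; case: eqP => // /eqP ne.
exact/s_ab/upd_lt.
Qed.

Lemma amenable_iff_small_models (L : signature) (C : structure L) (K : Type) n pi
    (Size Homog : (C -> Prop) -> Prop) :
  large_for L K -> strongly_homogeneous C K ->
  (forall A, Size A <-> card_le_T L A) ->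
  (forall M, elem_sub M -> strongly_aleph0_homogeneous M -> Homog M) ->
  (amenable C n pi <->
     (forall M, elem_sub M -> Size M -> Homog M -> inv_keisler_ext M n pi)) /\
  (amenable C n pi <->
     (exists A, Size A /\ forall M, elem_sub M -> Size M -> Homog M ->
        (forall x, A x -> M x) -> inv_keisler_ext M n pi)).
Proof.
move=> HK Hsh size homog.
have to_models : amenable C n pi ->
    forall M, elem_sub M -> Size M -> Homog M -> inv_keisler_ext M n pi.
  by move=> am M HM /size cM _; exact: amenable_inv_keisler_ext_small HK Hsh am HM cM.
have of_models : (exists A, Size A /\ forall M, elem_sub M -> Size M -> Homog M ->
    (forall x, A x -> M x) -> inv_keisler_ext M n pi) -> amenable C n pi.
  move=> [A [/size sA hA]]; apply: (amenable_of_local_measures HK Hsh sA).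
  by move=> M HM cM sh; apply: hA => //; [exact/size|exact: homog].
have size0 : Size (fun _ => False) by apply/size; exists (fun _ => Ftrue) => x y [].
split; split=> [am|hM]; first exact: to_models.
- by apply: of_models; exists (fun _ => False); split => // M HM sM hM' _; exact: hM.
- by exists (fun _ => False); split => // M HM sM hM' _; exact: to_models.
- exact: of_models.
Qed.

Theorem proposition3p4 (L : signature) (T : theory L) (C : structure L) (K : Type)
  (n : nat) (pi : form L -> Prop) :
  complete_theory T -> models C T ->
  large_for L K -> saturated C K -> strongly_homogeneous C K ->
  (forall psi, pi psi -> forall v, ffree v psi -> v < n) ->
  (countable_lang L ->
     (amenable C n pi <->
        (forall M : C -> Prop, elem_sub M -> countable_set M -> aleph0_homogeneous M ->
           inv_keisler_ext M n pi)) /\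
     (amenable C n pi <->
        (exists A : C -> Prop, countable_set A /\
           forall M : C -> Prop, elem_sub M -> countable_set M -> aleph0_homogeneous M ->
             (forall x, A x -> M x) -> inv_keisler_ext M n pi))) /\
  (~ countable_lang L ->
     (amenable C n pi <->
        (forall M : C -> Prop, elem_sub M -> card_le_T L M ->
           strongly_aleph0_homogeneous M -> inv_keisler_ext M n pi)) /\
     (amenable C n pi <->
        (exists A : C -> Prop, card_le_T L A /\
           forall M : C -> Prop, elem_sub M -> card_le_T L M ->
             strongly_aleph0_homogeneous M ->
             (forall x, A x -> M x) -> inv_keisler_ext M n pi))).
Proof.
move=> _ _ HK _ Hsh _; split=> [cL|_]; apply: amenable_iff_small_models HK Hsh _ _.
- by move=> A; exact: countable_card_le_T.
- exact: strongly_aleph0_homogeneous_aleph0.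
- by [].
- by [].
Qed.
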